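(* Let $S$ be a self-adjoint subspace in $X^2$ and $A$ a closed Hermitian subspace in $X^2$ with $D(S)\subset D(A)$. If $A_s$ is $S_s$-compact, then $S+A$ is a self-adjoint subspace in $X^2$.
   Context: $X$ is a complex Hilbert space and $X^2=X\times X$ carries the inner product $\langle (x,f),(y,g)\rangle=\langle x,y\rangle+\langle f,g\rangle$. A subspace $T$ in $X^2$ means a linear subspace of $X^2$ (a linear relation); a linear operator in $X$ is identified with its graph. Notation: $D(T)=\{x:(x,f)\in T \text{ for some } f\}$, $T(x)=\{f:(x,f)\in T\}$. The adjoint is $T^*=\{(y,g)\in X^2:\langle g,x\rangle=\langle y,f\rangle \text{ for all }(x,f)\in T\}$; $T$ is Hermitian if $T\subset T^*$ and self-adjoint if $T=T^*$. For subspaces $S,A$ in $X^2$, $S+A=\{(x,f+g):(x,f)\in S,(x,g)\in A\}$. For a closed subspace $T$, set $T_\infty=\{(0,g)\in X^2:(0,g)\in T\}$ and $T_s=T\ominus T_\infty$ (orthogonal complement of $T_\infty$ in $T$), so $T=T_s\oplus T_\infty$; $T_s$ is the graph of a linear operator (the operator part of $T$) with $D(T_s)=D(T)$ and $R(T_s)\subset T(0)^\perp$. For linear operators $U,V$ in $X$ with $D(V)\subset D(U)$: $U$ is $V$-compact if $U|_{D(V)}$ is compact as a map from $(D(V),\|\cdot\|_V)$ into $X$, where $\|x\|_V=\|x\|+\|Vx\|$. *)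

From Stdlib Require Import Reals.
Open Scope R_scope.

Record Cpx : Type := mkCpx { Re : R ; Im : R }.
Definition C0 : Cpx := mkCpx 0 0.
Definition C1 : Cpx := mkCpx 1 0.
Definition Cadd (a b : Cpx) : Cpx := mkCpx (Re a + Re b) (Im a + Im b).
Definition Cmul (a b : Cpx) : Cpx :=
  mkCpx (Re a * Re b - Im a * Im b) (Re a * Im b + Im a * Re b).
Definition Cconj (a : Cpx) : Cpx := mkCpx (Re a) (- Im a).

Record HilbertSpace : Type := {
  carrier :> Type;
  hzero : carrier;
  hadd : carrier -> carrier -> carrier;
  hopp : carrier -> carrier;
  hscal : Cpx -> carrier -> carrier;
  ip : carrier -> carrier -> Cpx;
  hadd_assoc : forall x y z, hadd x (hadd y z) = hadd (hadd x y) z;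
  hadd_comm : forall x y, hadd x y = hadd y x;
  hadd_0 : forall x, hadd x hzero = x;
  hadd_opp : forall x, hadd x (hopp x) = hzero;
  hscal_1 : forall x, hscal C1 x = x;
  hscal_assoc : forall a b x, hscal a (hscal b x) = hscal (Cmul a b) x;
  hscal_distr_l : forall a x y, hscal a (hadd x y) = hadd (hscal a x) (hscal a y);
  hscal_distr_r : forall a b x, hscal (Cadd a b) x = hadd (hscal a x) (hscal b x);
  ip_add_l : forall x y z, ip (hadd x y) z = Cadd (ip x z) (ip y z);
  ip_scal_l : forall a x y, ip (hscal a x) y = Cmul a (ip x y);
  ip_conj : forall x y, ip y x = Cconj (ip x y);
  ip_pos : forall x, 0 <= Re (ip x x);
  ip_def : forall x, ip x x = C0 -> x = hzero;
  hcomplete : forall u : nat -> carrier,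
    (forall eps, eps > 0 -> exists N, forall n m, (n >= N)%nat -> (m >= N)%nat ->
        sqrt (Re (ip (hadd (u n) (hopp (u m))) (hadd (u n) (hopp (u m))))) < eps) ->
    exists l, forall eps, eps > 0 -> exists N, forall n, (n >= N)%nat ->
        sqrt (Re (ip (hadd (u n) (hopp l)) (hadd (u n) (hopp l)))) < eps
}.

Arguments hzero {h}.
Arguments hadd {h}.
Arguments hopp {h}.
Arguments hscal {h}.
Arguments ip {h}.

Section Relations.
Variable X : HilbertSpace.

Definition hnorm (x : X) : R := sqrt (Re (ip x x)).
Definition hsub (x y : X) : X := hadd x (hopp y).

Definition ip2 (p q : X * X) : Cpx := Cadd (ip (fst p) (fst q)) (ip (snd p) (snd q)).
Definition norm2 (p : X * X) : R := sqrt (Re (ip2 p p)).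

(** A subspace T in X^2 (a linear relation) is a predicate on X * X *)
Definition is_linear_subspace (T : X * X -> Prop) : Prop :=
  T (hzero, hzero) /\
  (forall p q, T p -> T q -> T (hadd (fst p) (fst q), hadd (snd p) (snd q))) /\
  (forall (a : Cpx) p, T p -> T (hscal a (fst p), hscal a (snd p))).

Definition is_closed2 (T : X * X -> Prop) : Prop :=
  forall (u : nat -> X * X) (l : X * X),
    (forall n, T (u n)) ->
    (forall eps, eps > 0 -> exists N, forall n, (n >= N)%nat ->
        norm2 (hsub (fst (u n)) (fst l), hsub (snd (u n)) (snd l)) < eps) ->
    T l.

Definition dom (T : X * X -> Prop) (x : X) : Prop := exists f, T (x, f).

Definition adjoint (T : X * X -> Prop) : X * X -> Prop :=
  fun q => forall p, T p -> ip (snd q) (fst p) = ip (fst q) (snd p).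

Definition hermitian (T : X * X -> Prop) : Prop := forall p, T p -> adjoint T p.

Definition self_adjoint (T : X * X -> Prop) : Prop := forall p, T p <-> adjoint T p.

Definition rel_sum (S A : X * X -> Prop) : X * X -> Prop :=
  fun p => exists f g, S (fst p, f) /\ A (fst p, g) /\ snd p = hadd f g.

Definition T_inf (T : X * X -> Prop) : X * X -> Prop :=
  fun p => fst p = hzero /\ T p.

Definition T_s (T : X * X -> Prop) : X * X -> Prop :=
  fun p => T p /\ forall q, T_inf T q -> ip2 p q = C0.

(** For operators U, V (given by their graphs) with D(V) ⊂ D(U):
    U is V-compact iff U restricted to (D(V), ||.||_V) is compact into X,
    i.e. every ||.||_V-bounded sequence in D(V) is mapped by U to a
    sequence having a convergent subsequence in X. *)
Definition rel_compact (U V : X * X -> Prop) : Prop :=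
  forall (x v u : nat -> X) (M : R),
    (forall n, V (x n, v n)) ->
    (forall n, U (x n, u n)) ->
    (forall n, hnorm (x n) + hnorm (v n) <= M) ->
    exists (phi : nat -> nat) (y : X),
      (forall n, (phi n < phi (S n))%nat) /\
      (forall eps, eps > 0 -> exists N, forall n, (n >= N)%nat ->
          hnorm (hsub (u (phi n)) y) < eps).

End Relations.

Arguments hnorm {X}.
Arguments hsub {X}.
Arguments ip2 {X}.
Arguments norm2 {X}.
Arguments is_linear_subspace {X}.
Arguments is_closed2 {X}.
Arguments dom {X}.
Arguments adjoint {X}.
Arguments hermitian {X}.
Arguments self_adjoint {X}.
Arguments rel_sum {X}.
Arguments T_inf {X}.
Arguments T_s {X}.
Arguments rel_compact {X}.

From Pilot Require Import Defs.
From Stdlib Require Import Reals Lra Lia ClassicalEpsilon Classical.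
Open Scope R_scope.
Set Implicit Arguments.

(* Because [S] is self-adjoint, [|f - i s x|^2 = |f|^2 + s^2 |x|^2] for [(x, f)] in [S], so
   [S - i s] is bounded below and has closed range; a vector orthogonal to that range would give
   an element [(z, -i s z)] of [S^* = S], which forces [z = 0].  Hence [S - i s] is onto for every
   real [s <> 0].  Relative compactness makes [A_s] relatively [S_s]-bounded with arbitrarily small
   bound, say [|A_s x| <= |S_s x| / 4 + C |x|].  For [|s| = 4 C + 1] the map
   [w |-> A_s (S - i s)^-1 w] is then a contraction with constant [1/2], so [S + A - i s] is onto
   by Banach's fixed point theorem.  Finally, a Hermitian relation [T] for which [T - i t] and
   [T + i t] are both onto is self-adjoint. *)

Lemma Cpx_ext (a b : Cpx) : Re a = Re b -> Im a = Im b -> a = b.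
Proof. destruct a, b; simpl; intros; subst; reflexivity. Qed.

Ltac cpx := apply Cpx_ext; simpl; ring.

Definition Cm1 : Cpx := mkCpx (-1) 0.
Definition Ci (s : R) : Cpx := mkCpx 0 s.

Section VectorSpace.
Context {X : HilbertSpace}.
Implicit Types x y z : X.

Lemma hadd_0l x : hadd hzero x = x.
Proof. rewrite hadd_comm; apply hadd_0. Qed.

Lemma hadd_opp_l x : hadd (hopp x) x = hzero.
Proof. rewrite hadd_comm; apply hadd_opp. Qed.

Lemma hadd_cancel_l x y z : hadd x y = hadd x z -> y = z.
Proof.
  intro H. rewrite <- (hadd_0l y), <- (hadd_0l z), <- (hadd_opp_l x), <- !hadd_assoc, H.
  reflexivity.
Qed.

Lemma hopp_unique x y : hadd x y = hzero -> y = hopp x.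
Proof. intro H; apply (hadd_cancel_l x); rewrite H, hadd_opp; reflexivity. Qed.

Lemma hscal_C0 x : hscal C0 x = hzero.
Proof.
  apply (hadd_cancel_l (hscal C0 x)). rewrite hadd_0, <- hscal_distr_r. f_equal. cpx.
Qed.

Lemma hscal_m1 x : hscal Cm1 x = hopp x.
Proof.
  apply hopp_unique. rewrite <- (hscal_1 _ x) at 1. rewrite <- hscal_distr_r, <- (hscal_C0 x).
  f_equal. cpx.
Qed.

Lemma hscal_hzero (a : Cpx) : hscal a (@hzero X) = hzero.
Proof. rewrite <- (hscal_C0 hzero), hscal_assoc. f_equal. cpx. Qed.

Lemma hopp_hadd x y : hopp (hadd x y) = hadd (hopp x) (hopp y).
Proof. rewrite <- !hscal_m1, hscal_distr_l; reflexivity. Qed.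

Lemma hopp_hopp x : hopp (hopp x) = x.
Proof. rewrite <- !hscal_m1, hscal_assoc. rewrite <- (hscal_1 _ x) at 2. f_equal. cpx. Qed.

Lemma hopp_hzero : hopp (@hzero X) = hzero.
Proof. rewrite <- hscal_m1; apply hscal_hzero. Qed.

Lemma hadd_ACA (a b c d : X) : hadd (hadd a b) (hadd c d) = hadd (hadd a c) (hadd b d).
Proof. rewrite !hadd_assoc. f_equal. rewrite <- !hadd_assoc. f_equal. apply hadd_comm. Qed.

Lemma hsub_hadd (a b c d : X) : hsub (hadd a b) (hadd c d) = hadd (hsub a c) (hsub b d).
Proof. unfold hsub. rewrite hopp_hadd, hadd_ACA. reflexivity. Qed.

Lemma hsub_ACA (a b c d : X) : hsub (hsub a b) (hsub c d) = hsub (hsub a c) (hsub b d).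
Proof. unfold hsub. rewrite !hopp_hadd, !hopp_hopp, hadd_ACA. reflexivity. Qed.

Lemma hsub_trans (a u b : X) : hadd (hsub a u) (hsub u b) = hsub a b.
Proof.
  unfold hsub. rewrite hadd_ACA, hadd_assoc, <- (hadd_assoc _ a u), hadd_opp, hadd_0.
  reflexivity.
Qed.

Lemma hsub_hscal (a : Cpx) x y : hsub (hscal a x) (hscal a y) = hscal a (hsub x y).
Proof. unfold hsub. rewrite hscal_distr_l, <- !hscal_m1, !hscal_assoc. do 2 f_equal. cpx. Qed.

Lemma hsub_diag x : hsub x x = hzero.
Proof. apply hadd_opp. Qed.

Lemma hsub_hzero x : hsub x hzero = x.
Proof. unfold hsub; rewrite hopp_hzero; apply hadd_0. Qed.

Lemma hopp_hsub x y : hopp (hsub x y) = hsub y x.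
Proof. unfold hsub. rewrite hopp_hadd, hopp_hopp, hadd_comm; reflexivity. Qed.

Lemma hsub_addK x y : hadd (hsub x y) y = x.
Proof. unfold hsub. rewrite <- hadd_assoc, hadd_opp_l, hadd_0; reflexivity. Qed.

Lemma hsub_subKr x y : hsub x (hsub x y) = y.
Proof. unfold hsub. rewrite hopp_hadd, hopp_hopp, hadd_assoc, hadd_opp, hadd_0l. reflexivity. Qed.

Lemma hsub_subl (x a b : X) : hsub (hsub x a) (hsub x b) = hsub b a.
Proof.
  unfold hsub. rewrite hopp_hadd, hopp_hopp, hadd_ACA, hadd_opp, hadd_0l, hadd_comm.
  reflexivity.
Qed.

Lemma hsub_hadd_l (a b c : X) : hsub (hadd a b) c = hadd (hsub a c) b.
Proof. unfold hsub. rewrite <- !hadd_assoc, (hadd_comm _ b). reflexivity. Qed.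

Lemma hsub_eq0 x y : hsub x y = hzero -> x = y.
Proof. intro H. rewrite <- (hsub_addK x y), H, hadd_0l. reflexivity. Qed.

End VectorSpace.

Section InnerProduct.
Context {X : HilbertSpace}.
Implicit Types x y z : X.

Lemma ip_hzero_l y : ip (@hzero X) y = C0.
Proof. rewrite <- (hscal_C0 hzero), ip_scal_l. cpx. Qed.

Lemma ip_hzero_r x : ip x (@hzero X) = C0.
Proof. rewrite ip_conj, ip_hzero_l. cpx. Qed.

Lemma ip_hadd_r x y z : ip x (hadd y z) = Cadd (ip x y) (ip x z).
Proof. rewrite ip_conj, ip_add_l, (ip_conj _ y x), (ip_conj _ z x). cpx. Qed.

Lemma ip_hscal_r (a : Cpx) x y : ip x (hscal a y) = Cmul (Cconj a) (ip x y).
Proof. rewrite ip_conj, ip_scal_l, (ip_conj _ y x). cpx. Qed.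

Lemma ip_hsub_l x y z : ip (hsub x y) z = Cadd (ip x z) (Cmul Cm1 (ip y z)).
Proof. unfold hsub. rewrite ip_add_l, <- hscal_m1, ip_scal_l. reflexivity. Qed.

Lemma ip_hsub_r x y z : ip z (hsub x y) = Cadd (ip z x) (Cmul Cm1 (ip z y)).
Proof. unfold hsub. rewrite ip_hadd_r, <- hscal_m1, ip_hscal_r. f_equal. cpx. Qed.

Lemma Im_ip_self x : Im (ip x x) = 0.
Proof.
  pose proof (ip_conj _ x x) as H. destruct (ip x x) as [a b]; simpl in *. injection H; lra.
Qed.

Definition sqnorm x : R := Re (ip x x).
Definition rip x y : R := Re (ip x y).

Lemma hnormE x : hnorm x = sqrt (sqnorm x).
Proof. reflexivity. Qed.

Lemma sqnorm_ge0 x : 0 <= sqnorm x.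
Proof. apply ip_pos. Qed.

Lemma sqnorm_eq0 x : sqnorm x = 0 -> x = hzero.
Proof. intro H. apply ip_def, Cpx_ext; [exact H | apply Im_ip_self]. Qed.

Lemma sqnorm_hzero : sqnorm (@hzero X) = 0.
Proof. unfold sqnorm. rewrite ip_hzero_l. reflexivity. Qed.

Lemma sqnorm_hadd_scal x y (a : R) :
  sqnorm (hadd x (hscal (mkCpx a 0) y)) = sqnorm x + 2 * a * rip x y + a * a * sqnorm y.
Proof.
  unfold sqnorm, rip. rewrite ip_add_l, !ip_hadd_r, !ip_scal_l, !ip_hscal_r, (ip_conj _ y x).
  simpl. ring.
Qed.

Lemma sqnorm_hadd x y : sqnorm (hadd x y) = sqnorm x + sqnorm y + 2 * rip x y.
Proof.
  unfold sqnorm, rip. rewrite ip_add_l, !ip_hadd_r, (ip_conj _ y x). simpl. ring.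
Qed.

Lemma sqnorm_hscal (a : Cpx) x : sqnorm (hscal a x) = (Re a * Re a + Im a * Im a) * sqnorm x.
Proof.
  unfold sqnorm. rewrite ip_scal_l, ip_hscal_r. pose proof (Im_ip_self x).
  destruct a as [p q]; destruct (ip x x) as [u v]; simpl in *. subst. ring.
Qed.

Lemma parallelogram x y : sqnorm (hadd x y) + sqnorm (hsub x y) = 2 * sqnorm x + 2 * sqnorm y.
Proof. unfold hsub. rewrite <- hscal_m1. unfold Cm1. rewrite sqnorm_hadd, sqnorm_hadd_scal. ring. Qed.

Lemma rip_sqr_le x y : rip x y * rip x y <= sqnorm x * sqnorm y.
Proof.
  destruct (Req_dec (sqnorm y) 0) as [E|E].
  - apply sqnorm_eq0 in E; subst. unfold rip, sqnorm. rewrite !ip_hzero_r. simpl. lra.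
  - pose proof (sqnorm_ge0 y).
    (* the quadratic [t |-> |x + t y|^2] is nonnegative, in particular at its minimum *)
    pose proof (sqnorm_ge0 (hadd x (hscal (mkCpx (- rip x y / sqnorm y) 0) y))) as H0.
    rewrite sqnorm_hadd_scal in H0.
    replace (sqnorm x + 2 * (- rip x y / sqnorm y) * rip x y
             + - rip x y / sqnorm y * (- rip x y / sqnorm y) * sqnorm y)
      with (sqnorm x - rip x y * rip x y / sqnorm y) in H0 by (field; lra).
    assert (H1 : rip x y * rip x y / sqnorm y * sqnorm y <= sqnorm x * sqnorm y)
      by (apply Rmult_le_compat_r; lra).
    replace (rip x y * rip x y / sqnorm y * sqnorm y) with (rip x y * rip x y) in H1
      by (field; lra).
    exact H1.
Qed.

Lemma hnorm_ge0 x : 0 <= hnorm x.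
Proof. apply sqrt_pos. Qed.

Lemma hnorm_sq x : hnorm x * hnorm x = sqnorm x.
Proof. apply sqrt_sqrt, sqnorm_ge0. Qed.

Lemma hnorm_le_of_sqnorm x y : sqnorm x <= sqnorm y -> hnorm x <= hnorm y.
Proof. apply sqrt_le_1_alt. Qed.

Lemma hnorm_lt_of_sqnorm x (b : R) : 0 < b -> sqnorm x < b * b -> hnorm x < b.
Proof.
  intros. rewrite hnormE, <- (sqrt_square b) by lra.
  apply sqrt_lt_1_alt. split; [apply sqnorm_ge0 | lra].
Qed.

Lemma Rabs_rip_le x y : Rabs (rip x y) <= hnorm x * hnorm y.
Proof.
  rewrite !hnormE, <- sqrt_mult by apply sqnorm_ge0.
  rewrite <- sqrt_Rsqr_abs. apply sqrt_le_1_alt. apply rip_sqr_le.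
Qed.

Lemma hnorm_hadd_le x y : hnorm (hadd x y) <= hnorm x + hnorm y.
Proof.
  pose proof (hnorm_ge0 x); pose proof (hnorm_ge0 y).
  rewrite hnormE, <- (sqrt_square (hnorm x + hnorm y)) by lra.
  apply sqrt_le_1_alt. rewrite sqnorm_hadd.
  pose proof (Rabs_rip_le x y); pose proof (Rle_abs (rip x y)).
  rewrite <- (hnorm_sq x), <- (hnorm_sq y). nra.
Qed.

Lemma hnorm_hscal (a : Cpx) x : hnorm (hscal a x) = sqrt (Re a * Re a + Im a * Im a) * hnorm x.
Proof. rewrite !hnormE, sqnorm_hscal, sqrt_mult; [reflexivity | nra | apply sqnorm_ge0]. Qed.

Lemma hnorm_hscalR (a : R) x : hnorm (hscal (mkCpx a 0) x) = Rabs a * hnorm x.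
Proof.
  rewrite hnorm_hscal, <- sqrt_Rsqr_abs. simpl. f_equal. unfold Rsqr. f_equal. ring.
Qed.

Lemma hnorm_hsubC x y : hnorm (hsub x y) = hnorm (hsub y x).
Proof.
  rewrite <- hopp_hsub, <- hscal_m1, hnorm_hscal. simpl.
  replace (-1 * -1 + 0 * 0) with 1 by ring. rewrite sqrt_1. ring.
Qed.

Lemma hnorm_eq0 x : hnorm x = 0 -> x = hzero.
Proof. intro H. apply sqnorm_eq0. rewrite <- hnorm_sq, H. ring. Qed.

Lemma hnorm_hzero : hnorm (@hzero X) = 0.
Proof. rewrite hnormE, sqnorm_hzero. apply sqrt_0. Qed.

Lemma hnorm_hsub_le (a u b : X) : hnorm (hsub a b) <= hnorm (hsub a u) + hnorm (hsub u b).
Proof. rewrite <- (hsub_trans a u b) at 1. apply hnorm_hadd_le. Qed.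

End InnerProduct.

Lemma eventually_inv_succ_lt (d : R) :
  0 < d -> exists K : nat, forall n, (n >= K)%nat -> / (INR n + 1) < d.
Proof.
  intro Hd. destruct (INR_unbounded (/ d)) as [K HK]. exists K. intros n Hn.
  apply le_INR in Hn. pose proof (Rinv_0_lt_compat d Hd).
  rewrite <- (Rinv_inv d). apply Rinv_lt_contravar; [apply Rmult_lt_0_compat |]; lra.
Qed.

Lemma le_subseq (phi : nat -> nat) :
  (forall n, (phi n < phi (S n))%nat) -> forall n, (n <= phi n)%nat.
Proof. intros Hp n. induction n; [lia |]. specialize (Hp n). lia. Qed.

Lemma Rle_plus_small (a b K : R) :
  0 < K -> (forall e, 0 < e <= 1 -> a <= b + K * e) -> a <= b.
Proof.
  intros HK H. apply Rle_plus_epsilon. intros eps He.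
  set (e := Rmin 1 (eps / K)).
  assert (0 < eps / K) by (apply Rdiv_lt_0_compat; lra).
  assert (He1 : 0 < e <= 1) by (unfold e; split; [apply Rmin_glb_lt; lra | apply Rmin_l]).
  assert (He2 : K * e <= eps).
  { assert (Hmin : e <= eps / K) by apply Rmin_r.
    apply (Rmult_le_compat_l K) in Hmin; [| lra].
    replace (K * (eps / K)) with eps in Hmin by (field; lra). exact Hmin. }
  specialize (H e He1). lra.
Qed.

Section Convergence.
Context {X : HilbertSpace}.
Implicit Types x y z a b f : X.
Implicit Types s t : nat -> X.

Definition conv s a := forall eps, eps > 0 ->
  exists K, forall n, (n >= K)%nat -> hnorm (hsub (s n) a) < eps.

Definition cauchy s := forall eps, eps > 0 ->
  exists K, forall n m, (n >= K)%nat -> (m >= K)%nat -> hnorm (hsub (s n) (s m)) < eps.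

Lemma cauchy_conv s : cauchy s -> exists a, conv s a.
Proof. exact (hcomplete X s). Qed.

Lemma conv_cauchy s a : conv s a -> cauchy s.
Proof.
  intros H eps He. destruct (H (eps / 2)) as [K HK]; [lra |]. exists K. intros n m Hn Hm.
  pose proof (hnorm_hsub_le (s n) a (s m)). rewrite (hnorm_hsubC a) in H0.
  pose proof (HK n Hn). pose proof (HK m Hm). lra.
Qed.

Lemma conv_unique s a b : conv s a -> conv s b -> a = b.
Proof.
  intros Ha Hb. apply hsub_eq0, hnorm_eq0, Rle_antisym; [| apply hnorm_ge0].
  apply Rle_plus_epsilon. intros eps He.
  destruct (Ha (eps / 2)) as [K1 H1]; [lra |]. destruct (Hb (eps / 2)) as [K2 H2]; [lra |].
  specialize (H1 (K1 + K2)%nat ltac:(lia)). specialize (H2 (K1 + K2)%nat ltac:(lia)).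
  pose proof (hnorm_hsub_le a (s (K1 + K2)%nat) b) as HT.
  rewrite (hnorm_hsubC a (s _)) in HT. lra.
Qed.

Lemma conv_ext s t a : (forall n, s n = t n) -> conv s a -> conv t a.
Proof. intros E H eps He. destruct (H eps He) as [K HK]. exists K. intros n. rewrite <- E. auto. Qed.

Lemma cauchy_dominated (K : R) s t : 0 < K ->
  (forall n m, K * hnorm (hsub (s n) (s m)) <= hnorm (hsub (t n) (t m))) -> cauchy t -> cauchy s.
Proof.
  intros HK Hdom Ht eps He. destruct (Ht (K * eps)) as [N HN]; [nra |].
  exists N. intros n m Hn Hm. specialize (HN n m Hn Hm). specialize (Hdom n m).
  apply (Rmult_lt_reg_l K); lra.
Qed.

Lemma conv_const a : conv (fun _ => a) a.
Proof. intros eps He. exists O. intros. rewrite hsub_diag, hnorm_hzero. lra. Qed.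

Lemma conv_add s t a b :
  conv s a -> conv t b -> conv (fun n => hadd (s n) (t n)) (hadd a b).
Proof.
  intros Ha Hb eps He.
  destruct (Ha (eps / 2)) as [K1 H1]; [lra |]. destruct (Hb (eps / 2)) as [K2 H2]; [lra |].
  exists (K1 + K2)%nat. intros n Hn. rewrite hsub_hadd.
  pose proof (hnorm_hadd_le (hsub (s n) a) (hsub (t n) b)).
  specialize (H1 n ltac:(lia)). specialize (H2 n ltac:(lia)). lra.
Qed.

Lemma conv_scal s a (c : Cpx) : conv s a -> conv (fun n => hscal c (s n)) (hscal c a).
Proof.
  intros Ha eps He. set (k := sqrt (Re c * Re c + Im c * Im c)).
  assert (0 <= k) by apply sqrt_pos.
  destruct (Ha (eps / (k + 1))) as [K H1]; [apply Rdiv_lt_0_compat; lra |].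
  exists K. intros n Hn. rewrite hsub_hscal, hnorm_hscal. fold k.
  specialize (H1 n Hn). pose proof (hnorm_ge0 (hsub (s n) a)).
  apply (Rmult_lt_compat_l (k + 1)) in H1; [| lra].
  replace ((k + 1) * (eps / (k + 1))) with eps in H1 by (field; lra). nra.
Qed.

Lemma conv_sub s t a b :
  conv s a -> conv t b -> conv (fun n => hsub (s n) (t n)) (hsub a b).
Proof.
  intros Hs Ht. pose proof (conv_add Hs (conv_scal Cm1 Ht)) as H.
  rewrite hscal_m1 in H. intros eps He. destruct (H eps He) as [K HK].
  exists K. intros n Hn. specialize (HK n Hn). rewrite hscal_m1 in HK. exact HK.
Qed.

Lemma conv_subseq s a (phi : nat -> nat) :
  (forall n, (phi n < phi (S n))%nat) -> conv s a -> conv (fun n => s (phi n)) a.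
Proof.
  intros Hp H eps He. destruct (H eps He) as [K HK]. exists K. intros n Hn. apply HK.
  pose proof (@le_subseq phi Hp n). lia.
Qed.

Lemma rip_hsub_l x y z : rip (hsub x y) z = rip x z - rip y z.
Proof. unfold rip. rewrite ip_hsub_l. simpl. ring. Qed.

Lemma conv_rip_eq s t a b x f :
  conv s a -> conv t b -> (forall n, rip (s n) x = rip (t n) f) -> rip a x = rip b f.
Proof.
  intros Hs Ht Heq. apply cond_eq. intros eps He.
  set (K := hnorm x + hnorm f + 1).
  assert (HK : 0 < K) by (pose proof (hnorm_ge0 x); pose proof (hnorm_ge0 f); unfold K; lra).
  set (d := eps / K).
  assert (Hd : 0 < d) by (apply Rdiv_lt_0_compat; lra).
  destruct (Hs d Hd) as [K1 H1]. destruct (Ht d Hd) as [K2 H2].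
  set (n := (K1 + K2)%nat).
  specialize (H1 n ltac:(unfold n; lia)). specialize (H2 n ltac:(unfold n; lia)).
  replace (rip a x - rip b f) with (- rip (hsub (s n) a) x + rip (hsub (t n) b) f)
    by (rewrite !rip_hsub_l, (Heq n); ring).
  eapply Rle_lt_trans; [apply Rabs_triang |]. rewrite Rabs_Ropp.
  pose proof (Rabs_rip_le (hsub (s n) a) x). pose proof (Rabs_rip_le (hsub (t n) b) f).
  pose proof (hnorm_ge0 x). pose proof (hnorm_ge0 f).
  assert (hnorm (hsub (s n) a) * hnorm x <= d * hnorm x) by (apply Rmult_le_compat_r; lra).
  assert (hnorm (hsub (t n) b) * hnorm f <= d * hnorm f) by (apply Rmult_le_compat_r; lra).
  assert (Eeps : eps = d * K) by (unfold d; field; lra).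
  unfold K in Eeps. lra.
Qed.

Lemma Im_ip_as_rip x y : Im (ip x y) = rip x (hscal (Ci 1) y).
Proof. unfold rip. rewrite ip_hscal_r. simpl. ring. Qed.

Lemma conv_ip_eq s t a b x f :
  conv s a -> conv t b -> (forall n, ip (s n) x = ip (t n) f) -> ip a x = ip b f.
Proof.
  intros Hs Ht Heq. apply Cpx_ext.
  - eapply conv_rip_eq; [exact Hs | exact Ht |]. intro n. unfold rip. rewrite Heq. reflexivity.
  - rewrite !Im_ip_as_rip. eapply conv_rip_eq; [exact Hs | exact Ht |].
    intro n. rewrite <- !Im_ip_as_rip, Heq. reflexivity.
Qed.

Lemma conv_sqnorm_le (s : nat -> X) (a : X) (d : R) :
  conv s a -> (forall n, sqnorm (s n) < d + / (INR n + 1)) -> sqnorm a <= d.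
Proof.
  intros Hs Hb.
  assert (Hd : 0 <= d).
  { apply Rle_plus_epsilon. intros e He. destruct (eventually_inv_succ_lt He) as [K HK].
    pose proof (sqnorm_ge0 (s K)). specialize (Hb K). specialize (HK K (le_n K)). lra. }
  apply (Rle_plus_small (K := 2 * d + 6)); [lra |]. intros e He.
  destruct (Hs e) as [K1 HK1]; [lra |]. destruct (eventually_inv_succ_lt (proj1 He)) as [K2 HK2].
  set (n := (K1 + K2)%nat).
  specialize (HK1 n ltac:(unfold n; lia)). specialize (HK2 n ltac:(unfold n; lia)).
  specialize (Hb n).
  pose proof (hnorm_hsub_le a (s n) hzero) as Htri.
  rewrite !hsub_hzero, hnorm_hsubC in Htri.
  pose proof (hnorm_ge0 (s n)). pose proof (hnorm_ge0 a).
  pose proof (hnorm_sq (s n)). rewrite <- hnorm_sq.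
  assert (hnorm (s n) <= d + 2) by nra.
  nra.
Qed.

End Convergence.

(** * Orthogonal projection onto a closed subspace *)

Lemma linear_coef_eq0 (a b : R) : 0 <= a -> (forall t, 0 <= t * t * a - 2 * t * b) -> b = 0.
Proof.
  intros Ha H. specialize (H (b / (a + 1))).
  assert (Eb : b = b / (a + 1) * (a + 1)) by (field; lra).
  revert H Eb. generalize (b / (a + 1)) as q. intros q H Eb. rewrite Eb in H |- *.
  assert (q * q <= 0) by nra. assert (q = 0) by nra. subst. ring.
Qed.

Section Projection.
Context {X : HilbertSpace}.
Implicit Types x y z m : X.

Definition is_hsubspace (M : X -> Prop) := M hzero /\
  (forall x y, M x -> M y -> M (hadd x y)) /\ (forall (a : Cpx) x, M x -> M (hscal a x)).

Definition is_hclosed (M : X -> Prop) := forall s l, (forall n, M (s n)) -> conv s l -> M l.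

Variable M : X -> Prop.
Hypothesis M_subspace : is_hsubspace M.

Lemma nearest_point_orthogonal x m : M m ->
  (forall y, M y -> sqnorm (hsub x m) <= sqnorm (hsub x y)) ->
  forall y, M y -> ip (hsub x m) y = C0.
Proof.
  destruct M_subspace as [_ [Madd Mscal]]. intros Mm Hmin.
  assert (Hrip : forall y, M y -> rip (hsub x m) y = 0).
  { intros y My. apply (linear_coef_eq0 (sqnorm_ge0 y)). intro t.
    (* compare with the competitor [m + t y] *)
    specialize (Hmin _ (Madd _ _ Mm (Mscal (mkCpx t 0) _ My))).
    replace (hsub x (hadd m (hscal (mkCpx t 0) y)))
      with (hadd (hsub x m) (hscal (mkCpx (- t) 0) y)) in Hmin.
    - rewrite sqnorm_hadd_scal in Hmin. nra.
    - unfold hsub. rewrite hopp_hadd, <- (hscal_m1 (hscal _ y)), hscal_assoc, hadd_assoc.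
      do 3 f_equal. cpx. }
  intros y My. apply Cpx_ext.
  - exact (Hrip y My).
  - rewrite Im_ip_as_rip. exact (Hrip _ (Mscal _ _ My)).
Qed.

Lemma dist_inf x : exists d, 0 <= d /\ (forall y, M y -> d <= sqnorm (hsub x y)) /\
  (forall e, 0 < e -> exists y, M y /\ sqnorm (hsub x y) < d + e).
Proof.
  destruct M_subspace as [M0 _].
  set (E := fun z : R => exists y, M y /\ z = - sqnorm (hsub x y)).
  assert (HB : bound E).
  { exists 0. intros z [y [_ ->]]. pose proof (sqnorm_ge0 (hsub x y)). lra. }
  destruct (completeness E HB (ex_intro _ _ (ex_intro _ hzero (conj M0 eq_refl))))
    as [sup [Hub Hlub]].
  exists (- sup). split; [| split].
  - assert (sup <= 0); [| lra]. apply Hlub. intros z [y [_ ->]].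
    pose proof (sqnorm_ge0 (hsub x y)). lra.
  - intros y My. assert (Hy : E (- sqnorm (hsub x y))) by (exists y; auto).
    apply Hub in Hy. lra.
  - intros e He. apply NNPP. intro Hn.
    assert (is_upper_bound E (sup - e)).
    { intros z [y [My ->]]. apply Rnot_lt_le. intro. apply Hn. exists y. split; auto. lra. }
    apply Hlub in H. lra.
Qed.

Lemma minimizing_cauchy x (d : R) (ms : nat -> X) :
  (forall y, M y -> d <= sqnorm (hsub x y)) ->
  (forall n, M (ms n) /\ sqnorm (hsub x (ms n)) < d + / (INR n + 1)) -> cauchy ms.
Proof.
  destruct M_subspace as [_ [Madd Mscal]]. intros Hd Hms eps He.
  destruct (@eventually_inv_succ_lt (eps * eps / 4)) as [K HK]; [nra |].
  exists K. intros n k Hn Hk. apply hnorm_lt_of_sqnorm; [lra |].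
  destruct (Hms n) as [Mn Hn']. destruct (Hms k) as [Mk Hk'].
  (* the midpoint of [ms k] and [ms n] lies in [M], hence is at distance at least [d] *)
  set (mid := hscal (mkCpx (1 / 2) 0) (hadd (ms k) (ms n))).
  assert (Hmid : hadd (hsub x (ms k)) (hsub x (ms n)) = hscal (mkCpx 2 0) (hsub x mid)).
  { unfold mid. rewrite <- hsub_hscal, hscal_assoc.
    replace (Cmul (mkCpx 2 0) (mkCpx (1 / 2) 0)) with Defs.C1 by (apply Cpx_ext; simpl; field).
    rewrite hscal_1, <- hsub_hadd. f_equal. rewrite <- (hscal_1 _ x) at 1 2.
    rewrite <- hscal_distr_r. f_equal. apply Cpx_ext; simpl; field. }
  pose proof (parallelogram (hsub x (ms k)) (hsub x (ms n))) as Hp.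
  rewrite hsub_subl, Hmid, sqnorm_hscal in Hp. simpl in Hp.
  pose proof (Hd mid (Mscal _ _ (Madd _ _ Mk Mn))).
  pose proof (HK n Hn). pose proof (HK k Hk). lra.
Qed.

Hypothesis M_closed : is_hclosed M.

Lemma nearest_point_exists x : exists m, M m /\
  forall y, M y -> sqnorm (hsub x m) <= sqnorm (hsub x y).
Proof.
  destruct (dist_inf x) as [d [_ [Hlow Happrox]]].
  assert (Hseq : forall n : nat, exists m, M m /\ sqnorm (hsub x m) < d + / (INR n + 1)).
  { intro n. apply Happrox, Rinv_0_lt_compat. pose proof (pos_INR n). lra. }
  destruct (choice _ Hseq) as [ms Hms].
  destruct (cauchy_conv (@minimizing_cauchy x d ms Hlow Hms)) as [m Hm].
  exists m. split.
  - eapply M_closed; [apply Hms | exact Hm].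
  - intros y My. apply Rle_trans with d; [| exact (Hlow y My)].
    apply (conv_sqnorm_le (s := fun n => hsub x (ms n))); [| apply Hms].
    apply conv_sub; [apply conv_const | exact Hm].
Qed.

Lemma projection x : exists m, M m /\ forall y, M y -> ip (hsub x m) y = C0.
Proof.
  destruct (nearest_point_exists x) as [m [Mm Hmin]].
  exists m. split; [exact Mm | exact (nearest_point_orthogonal x Mm Hmin)].
Qed.

End Projection.

Section Relations.
Context {X : HilbertSpace}.
Implicit Types x y f g u v : X.
Implicit Types T S A : X * X -> Prop.
Implicit Types p q : X * X.

Definition conv2 (w : nat -> X * X) (l : X * X) := forall eps, eps > 0 ->
  exists N, forall n, (n >= N)%nat ->
    norm2 (hsub (fst (w n)) (fst l), hsub (snd (w n)) (snd l)) < eps.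

Lemma conv2_fst_snd (w : nat -> X * X) l :
  conv2 w l -> conv (fun n => fst (w n)) (fst l) /\ conv (fun n => snd (w n)) (snd l).
Proof.
  intro H. unfold norm2, ip2 in H. simpl in H.
  split; intros eps He; destruct (H eps He) as [K HK]; exists K; intros n Hn;
    specialize (HK n Hn); refine (Rle_lt_trans _ _ _ (sqrt_le_1_alt _ _ _) HK); simpl.
  - pose proof (sqnorm_ge0 (hsub (snd (w n)) (snd l))). unfold sqnorm in *. lra.
  - pose proof (sqnorm_ge0 (hsub (fst (w n)) (fst l))). unfold sqnorm in *. lra.
Qed.

Lemma conv2_pair (w : nat -> X * X) l :
  conv (fun n => fst (w n)) (fst l) -> conv (fun n => snd (w n)) (snd l) -> conv2 w l.
Proof.
  intros H1 H2 eps He.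
  destruct (H1 (eps / 2)) as [K1 HK1]; [lra |]. destruct (H2 (eps / 2)) as [K2 HK2]; [lra |].
  exists (K1 + K2)%nat. intros n Hn.
  specialize (HK1 n ltac:(lia)). specialize (HK2 n ltac:(lia)).
  set (a := hsub (fst (w n)) (fst l)) in *. set (b := hsub (snd (w n)) (snd l)) in *.
  apply Rle_lt_trans with (hnorm a + hnorm b); [| lra].
  pose proof (hnorm_ge0 a). pose proof (hnorm_ge0 b).
  pose proof (hnorm_sq a). pose proof (hnorm_sq b).
  unfold norm2, ip2. rewrite <- (sqrt_square (hnorm a + hnorm b)) by lra.
  apply sqrt_le_1_alt. simpl. unfold sqnorm in *. nra.
Qed.

Lemma adjoint_closed T : is_closed2 (adjoint T).
Proof.
  intros w l Hw Hc. destruct (conv2_fst_snd Hc) as [H1 H2].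
  intros p Hp. eapply conv_ip_eq; [exact H2 | exact H1 |]. intro n. exact (Hw n p Hp).
Qed.

Lemma self_adjoint_closed T : self_adjoint T -> is_closed2 T.
Proof.
  intros H w l Hw Hc. apply H. apply (adjoint_closed (T := T) w l); [| exact Hc].
  intro n. apply H, Hw.
Qed.

Lemma self_adjoint_hermitian T : self_adjoint T -> hermitian T.
Proof. intros H p. apply H. Qed.

Lemma subspace_hsub T p q : is_linear_subspace T -> T p -> T q ->
  T (hsub (fst p) (fst q), hsub (snd p) (snd q)).
Proof.
  intros [_ [Tadd Tscal]] Hp Hq. pose proof (Tadd _ _ Hp (Tscal Cm1 _ Hq)) as H. simpl in H.
  rewrite !hscal_m1 in H. exact H.
Qed.

Definition fiber0 T : X -> Prop := fun g => T (hzero, g).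

Lemma fiber0_subspace T : is_linear_subspace T -> is_hsubspace (fiber0 T).
Proof.
  intros [T0 [Tadd Tscal]]. unfold fiber0. split; [exact T0 | split].
  - intros x y Hx Hy. pose proof (Tadd _ _ Hx Hy) as H. simpl in H.
    rewrite hadd_0 in H. exact H.
  - intros a x Hx. pose proof (Tscal a _ Hx) as H. simpl in H.
    rewrite hscal_hzero in H. exact H.
Qed.

Lemma fiber0_closed T : is_closed2 T -> is_hclosed (fiber0 T).
Proof.
  intros Tc s l Hs Hc. apply (Tc (fun n => (hzero, s n)) (hzero, l)); [exact Hs |].
  apply conv2_pair; simpl; [apply conv_const | exact Hc].
Qed.

Lemma T_s_orth T {x u} g : T_s T (x, u) -> T (hzero, g) -> ip u g = C0.
Proof.
  intros [_ H] Hg. specialize (H (hzero, g) (conj eq_refl Hg)). unfold ip2 in H; simpl in H.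
  rewrite ip_hzero_r in H. rewrite <- H. cpx.
Qed.

(* [u] is the component of [f] orthogonal to the closed subspace [T(0)] *)
Lemma T_s_decompose T {x f} : is_linear_subspace T -> is_closed2 T -> T (x, f) ->
  exists u, T_s T (x, u) /\ T (hzero, hsub f u).
Proof.
  intros Tl Tc Hf.
  destruct (projection (fiber0_subspace Tl) (fiber0_closed Tc) f) as [m [Hm Hort]].
  exists (hsub f m). rewrite hsub_subKr. split; [split | exact Hm].
  - pose proof (subspace_hsub (x, f) (hzero, m) Tl Hf Hm) as H. simpl in H.
    rewrite hsub_hzero in H. exact H.
  - intros [q1 q2] [Hq1 Hq2]. simpl in Hq1. subst q1. unfold ip2; simpl.
    rewrite ip_hzero_r, (Hort q2 Hq2). cpx.
Qed.

Lemma T_s_unique T {x u v} : is_linear_subspace T -> T_s T (x, u) -> T_s T (x, v) -> u = v.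
Proof.
  intros Tl Hu Hv. pose proof (subspace_hsub (x, u) (x, v) Tl (proj1 Hu) (proj1 Hv)) as H.
  simpl in H. rewrite hsub_diag in H.
  pose proof (T_s_orth (hsub u v) Hu H) as Eu. pose proof (T_s_orth (hsub u v) Hv H) as Ev.
  apply hsub_eq0, ip_def. rewrite ip_hsub_l, Eu, Ev. cpx.
Qed.

Lemma T_s_subspace T : is_linear_subspace T -> is_linear_subspace (T_s T).
Proof.
  intros Tl. pose proof Tl as [T0 [Tadd Tscal]]. split; [| split].
  - split; [exact T0 |]. intros q _. unfold ip2; simpl. rewrite !ip_hzero_l. cpx.
  - intros p q [Hp Op] [Hq Oq]. split; [apply Tadd; auto |]. intros w Hw.
    specialize (Op w Hw). specialize (Oq w Hw). unfold ip2 in *; simpl in *.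
    rewrite !ip_add_l.
    destruct (ip (fst p) (fst w)), (ip (snd p) (snd w)), (ip (fst q) (fst w)), (ip (snd q) (snd w)).
    unfold C0 in *. injection Op; injection Oq; intros. apply Cpx_ext; simpl; lra.
  - intros a p [Hp Op]. split; [apply Tscal; auto |]. intros w Hw. specialize (Op w Hw).
    unfold ip2 in *; simpl in *. rewrite !ip_scal_l.
    destruct (ip (fst p) (fst w)), (ip (snd p) (snd w)), a.
    unfold C0 in *. injection Op; intros. simpl in *. subst. apply Cpx_ext; simpl; nra.
Qed.

Lemma rel_sum_subspace S A :
  is_linear_subspace S -> is_linear_subspace A -> is_linear_subspace (rel_sum S A).
Proof.
  intros [S0 [Sa Ss]] [A0 [Aa As]]. split; [| split].
  - exists hzero, hzero. simpl. rewrite hadd_0. auto.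
  - intros [x1 k1] [x2 k2] [f1 [g1 [H1 [H2 ->]]]] [f2 [g2 [H3 [H4 ->]]]]. simpl in *.
    exists (hadd f1 f2), (hadd g1 g2). simpl.
    split; [apply (Sa _ _ H1 H3) | split; [apply (Aa _ _ H2 H4) | apply hadd_ACA]].
  - intros a [x k] [f [g [H1 [H2 ->]]]]. simpl in *. exists (hscal a f), (hscal a g). simpl.
    split; [apply (Ss a _ H1) | split; [apply (As a _ H2) | apply hscal_distr_l]].
Qed.

Lemma rel_sum_hermitian S A : hermitian S -> hermitian A -> hermitian (rel_sum S A).
Proof.
  intros HS HA [y k] [f' [g' [H1 [H2 E]]]] [x k'] [f [g [H3 [H4 E']]]]. simpl in *. subst.
  pose proof (HS _ H1 (x, f) H3) as e1. pose proof (HA _ H2 (x, g) H4) as e2. simpl in *.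
  rewrite ip_add_l, ip_hadd_r, e1, e2. reflexivity.
Qed.

End Relations.

(** * The shifted ranges of a self-adjoint relation *)

Section ShiftedRange.
Context {X : HilbertSpace}.
Implicit Types x y z f g u v w : X.
Implicit Types T : X * X -> Prop.

Definition shifted_range T (s : R) (w : X) : Prop :=
  exists x f, T (x, f) /\ hsub f (hscal (Ci s) x) = w.

Lemma hermitian_ip_real T {x f} : hermitian T -> T (x, f) -> Im (ip f x) = 0.
Proof.
  intros HT H. pose proof (HT _ H (x, f) H) as e. simpl in e.
  rewrite (ip_conj _ x f) in e |- *. destruct (ip x f) as [a b]. unfold Cconj in *; simpl in *.
  injection e. lra.
Qed.

(* the cross terms vanish because [<f, x>] is real *)
Lemma sqnorm_shift T {x f} (s : R) : hermitian T -> T (x, f) ->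
  sqnorm (hsub f (hscal (Ci s) x)) = sqnorm f + s * s * sqnorm x.
Proof.
  intros HT H. pose proof (hermitian_ip_real HT H) as e.
  pose proof (ip_conj _ f x) as E. pose proof (Im_ip_self x) as Ex.
  unfold sqnorm. rewrite ip_hsub_l, !ip_hsub_r, !ip_scal_l, !ip_hscal_r, E.
  unfold Ci. simpl. rewrite e, Ex. ring.
Qed.

Lemma hnorm_le_shift T {x f} (s : R) : hermitian T -> T (x, f) ->
  hnorm f <= hnorm (hsub f (hscal (Ci s) x)).
Proof.
  intros HT H. apply hnorm_le_of_sqnorm. rewrite (sqnorm_shift s HT H).
  pose proof (sqnorm_ge0 x). nra.
Qed.

Lemma Rabs_hnorm_le_shift T {x f} (s : R) : hermitian T -> T (x, f) ->
  Rabs s * hnorm x <= hnorm (hsub f (hscal (Ci s) x)).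
Proof.
  intros HT H. rewrite !hnormE, <- (sqrt_Rsqr_abs s), <- sqrt_mult by
    (try apply Rle_0_sqr; apply sqnorm_ge0).
  apply sqrt_le_1_alt. rewrite (sqnorm_shift s HT H). unfold Rsqr.
  pose proof (sqnorm_ge0 f). lra.
Qed.

Lemma shifted_range_subspace T (s : R) :
  is_linear_subspace T -> is_hsubspace (shifted_range T s).
Proof.
  intros [T0 [Tadd Tscal]]. split; [| split].
  - exists hzero, hzero. split; auto. rewrite hscal_hzero, hsub_diag. reflexivity.
  - intros w1 w2 [x1 [f1 [H1 <-]]] [x2 [f2 [H2 <-]]]. exists (hadd x1 x2), (hadd f1 f2).
    split; [apply (Tadd _ _ H1 H2) |]. rewrite hscal_distr_l, hsub_hadd. reflexivity.
  - intros a w [x [f [H <-]]]. exists (hscal a x), (hscal a f). split; [apply (Tscal a _ H) |].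
    rewrite <- hsub_hscal, !hscal_assoc. do 2 f_equal. destruct a. cpx.
Qed.

Lemma shifted_range_closed T (s : R) : s <> 0 ->
  is_linear_subspace T -> hermitian T -> is_closed2 T -> is_hclosed (shifted_range T s).
Proof.
  intros Hs Tl HT Tc ws l Hws Hc.
  destruct (choice _ Hws) as [xs Hxs]. destruct (choice _ Hxs) as [fs Hfs].
  (* the differences [(xs i - xs j, fs i - fs j)] lie in [T], and [T - i s] is bounded below *)
  assert (Hdiff : forall i j, T (hsub (xs i) (xs j), hsub (fs i) (fs j)) /\
      hsub (ws i) (ws j) = hsub (hsub (fs i) (fs j)) (hscal (Ci s) (hsub (xs i) (xs j)))).
  { intros i j. destruct (Hfs i) as [Hi <-]. destruct (Hfs j) as [Hj <-].
    split; [exact (subspace_hsub (xs i, fs i) (xs j, fs j) Tl Hi Hj) |].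
    rewrite <- hsub_hscal, hsub_ACA. reflexivity. }
  assert (Cw : cauchy ws) by exact (conv_cauchy Hc).
  assert (Cf : cauchy fs).
  { apply (@cauchy_dominated _ 1 fs ws); [lra | | exact Cw].
    intros i j. destruct (Hdiff i j) as [HT' ->]. rewrite Rmult_1_l.
    exact (hnorm_le_shift s HT HT'). }
  assert (Cx : cauchy xs).
  { apply (@cauchy_dominated _ (Rabs s) xs ws); [apply Rabs_pos_lt, Hs | | exact Cw].
    intros i j. destruct (Hdiff i j) as [HT' ->]. exact (Rabs_hnorm_le_shift s HT HT'). }
  destruct (cauchy_conv Cf) as [f Hf]. destruct (cauchy_conv Cx) as [x Hx].
  exists x, f. split.
  - apply (Tc (fun n => (xs n, fs n)) (x, f)); [intro n; apply Hfs |].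
    apply conv2_pair; simpl; assumption.
  - apply (conv_unique (conv_sub Hf (conv_scal (Ci s) Hx))).
    apply (conv_ext (s := ws)); [intro n; symmetry; apply Hfs | exact Hc].
Qed.

Lemma shifted_range_orthogonal_eq0 T (s : R) {z} : s <> 0 -> self_adjoint T ->
  (forall w, shifted_range T s w -> ip z w = C0) -> z = hzero.
Proof.
  intros Hs HT Hz.
  assert (Hadj : T (z, hscal (Cconj (Ci s)) z)).
  { apply HT. intros [x f] Hxf. simpl. rewrite ip_scal_l.
    specialize (Hz _ (ex_intro _ x (ex_intro _ f (conj Hxf eq_refl)))).
    rewrite ip_hsub_r, ip_hscal_r in Hz.
    destruct (ip z f), (ip z x). unfold C0 in Hz. injection Hz. intros.
    apply Cpx_ext; simpl in *; lra. }
  pose proof (hermitian_ip_real (self_adjoint_hermitian HT) Hadj) as e.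
  rewrite ip_scal_l in e. pose proof (Im_ip_self z).
  apply sqnorm_eq0. unfold sqnorm. unfold Ci in e. simpl in e.
  destruct (ip z z); simpl in *. subst. nra.
Qed.

Lemma self_adjoint_shifted_range_full T (s : R) : s <> 0 ->
  is_linear_subspace T -> self_adjoint T -> forall w, shifted_range T s w.
Proof.
  intros Hs Tl HT w.
  destruct (projection (shifted_range_subspace s Tl)
              (shifted_range_closed Hs Tl (self_adjoint_hermitian HT) (self_adjoint_closed HT)) w)
    as [m [Hm Hort]].
  replace w with m; [exact Hm |].
  symmetry. apply hsub_eq0. exact (shifted_range_orthogonal_eq0 Hs HT Hort).
Qed.

End ShiftedRange.

(** * Relative compactness gives arbitrarily small relative bounds *)

Section RelativeBound.
Context {X : HilbertSpace}.
Implicit Types x y z f g u v w : X.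
Implicit Types S A : X * X -> Prop.

Definition rel_bounded (U V : X * X -> Prop) (a b : R) : Prop :=
  forall x v u, V (x, v) -> U (x, u) -> hnorm u <= a * hnorm v + b * hnorm x.

Lemma rel_compact_unit_vanishing S A (xs vs us : nat -> X) (M : R) :
  is_closed2 A -> rel_compact (T_s A) (T_s S) ->
  (forall n, T_s S (xs n, vs n)) -> (forall n, T_s A (xs n, us n)) ->
  (forall n, hnorm (xs n) + hnorm (vs n) <= M) -> conv xs hzero ->
  ~ (forall n, hnorm (us n) = 1).
Proof.
  intros Ac Hcomp HS HA Hbd Hx Hu1.
  destruct (Hcomp xs vs us M HS HA Hbd) as [phi [y [Hphi Hy]]].
  (* the limit [y] lies in [A(0)] and is orthogonal to it *)
  assert (HAy : A (hzero, y)).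
  { apply (Ac (fun n => (xs (phi n), us (phi n))) (hzero, y)); [intro n; apply HA |].
    apply conv2_pair; [exact (conv_subseq phi Hphi Hx) | exact Hy]. }
  assert (Hyy : ip y y = ip hzero y).
  { apply (conv_ip_eq (t := fun _ => hzero) y y Hy (conv_const hzero)).
    intro n. rewrite ip_hzero_l. exact (T_s_orth y (HA (phi n)) HAy). }
  rewrite ip_hzero_l in Hyy. apply ip_def in Hyy. subst y.
  destruct (Hy (1 / 2)) as [K HK]; [lra |]. specialize (HK K (le_n _)).
  rewrite hsub_hzero, Hu1 in HK. lra.
Qed.

Lemma exists_normalized_violation S A (eps : R) : eps > 0 ->
  is_linear_subspace S -> is_linear_subspace A ->
  (forall C, 0 <= C -> ~ rel_bounded (T_s A) (T_s S) eps C) ->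
  forall n : nat, exists xvu : X * X * X,
    let '(x, v, u) := xvu in T_s S (x, v) /\ T_s A (x, u) /\ hnorm u = 1 /\
      eps * hnorm v + (INR n + 1) * hnorm x < 1.
Proof.
  intros He Sl Al Hviol n.
  assert (HC : 0 <= INR n + 1) by (pose proof (pos_INR n); lra).
  destruct (not_all_ex_not _ _ (Hviol _ HC)) as [x Hx].
  destruct (not_all_ex_not _ _ Hx) as [v Hv]. destruct (not_all_ex_not _ _ Hv) as [u Hu].
  destruct (imply_to_and _ _ Hu) as [HSv Hu']. destruct (imply_to_and _ _ Hu') as [HAu Hlt].
  apply Rnot_le_lt in Hlt.
  pose proof (hnorm_ge0 v). pose proof (hnorm_ge0 x).
  assert (Hpos : 0 < hnorm u) by nra.
  set (k := mkCpx (/ hnorm u) 0).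
  assert (Hk : forall z, hnorm (hscal k z) = / hnorm u * hnorm z).
  { intro z. unfold k. rewrite hnorm_hscalR, Rabs_pos_eq; [reflexivity |].
    left; apply Rinv_0_lt_compat, Hpos. }
  exists (hscal k x, hscal k v, hscal k u). split; [| split; [| split]].
  - exact (proj2 (proj2 (T_s_subspace Sl)) k (x, v) HSv).
  - exact (proj2 (proj2 (T_s_subspace Al)) k (x, u) HAu).
  - rewrite Hk. field. lra.
  - rewrite !Hk. apply (Rmult_lt_compat_l (/ hnorm u)) in Hlt; [| apply Rinv_0_lt_compat, Hpos].
    rewrite Rinv_l in Hlt by lra. nra.
Qed.

Lemma rel_compact_rel_bound S A (eps : R) : eps > 0 ->
  is_linear_subspace S -> is_linear_subspace A -> is_closed2 A ->
  rel_compact (T_s A) (T_s S) -> exists C, 0 <= C /\ rel_bounded (T_s A) (T_s S) eps C.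
Proof.
  intros He Sl Al Ac Hcomp. apply NNPP. intro Hn.
  assert (Hviol : forall C, 0 <= C -> ~ rel_bounded (T_s A) (T_s S) eps C)
    by (intros C HC Hb; apply Hn; exists C; auto).
  destruct (choice _ (exists_normalized_violation He Sl Al Hviol)) as [tr Htr].
  set (xs := fun n => fst (fst (tr n))). set (vs := fun n => snd (fst (tr n))).
  set (us := fun n => snd (tr n)).
  assert (Htr' : forall n, T_s S (xs n, vs n) /\ T_s A (xs n, us n) /\ hnorm (us n) = 1 /\
      eps * hnorm (vs n) + (INR n + 1) * hnorm (xs n) < 1).
  { intro n. specialize (Htr n). unfold xs, vs, us. destruct (tr n) as [[x v] u]. exact Htr. }
  assert (Hx : forall n, hnorm (xs n) < / (INR n + 1)).
  { intro n. destruct (Htr' n) as [_ [_ [_ H]]].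
    pose proof (hnorm_ge0 (vs n)). pose proof (pos_INR n).
    apply (Rmult_lt_reg_l (INR n + 1)); [lra |]. rewrite Rinv_r by lra. nra. }
  assert (Hv : forall n, hnorm (vs n) <= / eps).
  { intro n. destruct (Htr' n) as [_ [_ [_ H]]].
    pose proof (hnorm_ge0 (xs n)). pose proof (pos_INR n).
    apply (Rmult_le_reg_l eps); [lra |]. rewrite Rinv_r by lra. nra. }
  apply (@rel_compact_unit_vanishing S A xs vs us (1 + / eps) Ac Hcomp
           (fun n => proj1 (Htr' n)) (fun n => proj1 (proj2 (Htr' n)))).
  - intro n. specialize (Hx n). specialize (Hv n). pose proof (pos_INR n).
    assert (/ (INR n + 1) <= 1) by (rewrite <- Rinv_1; apply Rinv_le_contravar; lra). lra.
  - intros e He'. destruct (eventually_inv_succ_lt He') as [K HK]. exists K. intros n HnK.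
    rewrite hsub_hzero. specialize (HK n HnK). specialize (Hx n). lra.
  - intro n. apply Htr'.
Qed.

End RelativeBound.

(** * Banach's fixed point theorem for half-contractions *)

Section FixedPoint.
Context {X : HilbertSpace}.
Implicit Types w : X.

Lemma cauchy_geometric (ws : nat -> X) (D : R) :
  (forall n, hnorm (hsub (ws (S n)) (ws n)) <= D * (/ 2) ^ n) -> cauchy ws.
Proof.
  intro Hstep.
  assert (HD : 0 <= D) by (pose proof (hnorm_ge0 (hsub (ws 1%nat) (ws 0%nat))); specialize (Hstep O);
                           simpl in Hstep; lra).
  assert (Hgap : forall k n, hnorm (hsub (ws (n + k)%nat) (ws n)) <= 2 * D * ((/ 2) ^ n - (/ 2) ^ (n + k))).
  { induction k as [| k IHk]; intro n.
    - rewrite Nat.add_0_r, hsub_diag, hnorm_hzero. lra.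
    - pose proof (hnorm_hsub_le (ws (n + S k)%nat) (ws (n + k)%nat) (ws n)).
      rewrite Nat.add_succ_r in *. pose proof (Hstep (n + k)%nat). specialize (IHk n).
      simpl ((/ 2) ^ S (n + k)). lra. }
  intros eps He.
  destruct (pow_lt_1_zero (/ 2) ltac:(rewrite Rabs_pos_eq; lra) (eps / (2 * D + 1)))
    as [K HK]; [apply Rdiv_lt_0_compat; lra |].
  assert (Hle : forall n m, (n >= K)%nat -> (m >= n)%nat -> hnorm (hsub (ws m) (ws n)) < eps).
  { intros n m Hn Hm. replace m with (n + (m - n))%nat by lia.
    pose proof (Hgap (m - n)%nat n). specialize (HK n Hn).
    rewrite Rabs_pos_eq in HK by (apply pow_le; lra).
    assert (0 <= 2 * D * (/ 2) ^ (n + (m - n))) by (pose proof (pow_le (/ 2) (n + (m - n)) ltac:(lra)); nra).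
    assert (2 * D * (/ 2) ^ n <= 2 * D * (eps / (2 * D + 1))) by (apply Rmult_le_compat_l; lra).
    assert (2 * D * (eps / (2 * D + 1)) < eps).
    { replace (2 * D * (eps / (2 * D + 1))) with (eps - eps / (2 * D + 1)) by (field; lra).
      assert (0 < eps / (2 * D + 1)) by (apply Rdiv_lt_0_compat; lra). lra. }
    lra. }
  exists K. intros n m Hn Hm. destruct (Nat.le_ge_cases n m).
  - rewrite hnorm_hsubC. apply Hle; auto.
  - apply Hle; auto.
Qed.

Lemma contraction_fixed_point (F : X -> X) :
  (forall w1 w2, hnorm (hsub (F w1) (F w2)) <= / 2 * hnorm (hsub w1 w2)) -> exists w, F w = w.
Proof.
  intro HF. set (ws := fun n => Nat.iter n F hzero).
  assert (Hstep : forall n, hnorm (hsub (ws (S n)) (ws n))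
                            <= hnorm (hsub (ws 1%nat) (ws 0%nat)) * (/ 2) ^ n).
  { induction n as [| n IHn]; [simpl; lra |].
    pose proof (HF (ws (S n)) (ws n)). simpl in *. lra. }
  destruct (cauchy_conv (cauchy_geometric ws Hstep)) as [w Hw]. exists w.
  assert (HFw : conv (fun n => F (ws n)) (F w)).
  { intros eps He. destruct (Hw eps He) as [K HK]. exists K. intros n Hn.
    pose proof (HF (ws n) w). pose proof (HK n Hn). pose proof (hnorm_ge0 (hsub (ws n) w)). lra. }
  apply (conv_unique HFw). intros eps He. destruct (Hw eps He) as [K HK].
  exists K. intros n Hn. apply (HK (S n)). lia.
Qed.

End FixedPoint.

(** * The shifted ranges of [S + A] *)

Section SumRange.
Context {X : HilbertSpace}.
Implicit Types x y z f g u v w h k : X.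

Lemma T_s_hnorm_le (T : X * X -> Prop) {x v f} :
  is_linear_subspace T -> T_s T (x, v) -> T (x, f) -> hnorm v <= hnorm f.
Proof.
  intros Tl Hv Hf. apply hnorm_le_of_sqnorm.
  pose proof (subspace_hsub (x, f) (x, v) Tl Hf (proj1 Hv)) as H0. simpl in H0.
  rewrite hsub_diag in H0.
  rewrite <- (hsub_addK f v), hadd_comm, sqnorm_hadd.
  unfold rip. rewrite (T_s_orth _ Hv H0). simpl. pose proof (sqnorm_ge0 (hsub f v)). lra.
Qed.

Lemma shift_injective (T : X * X -> Prop) (s : R) {x1 f1 x2 f2} : s <> 0 ->
  is_linear_subspace T -> hermitian T -> T (x1, f1) -> T (x2, f2) ->
  hsub f1 (hscal (Ci s) x1) = hsub f2 (hscal (Ci s) x2) -> x1 = x2.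
Proof.
  intros Hs Tl HT H1 H2 E.
  pose proof (subspace_hsub (x1, f1) (x2, f2) Tl H1 H2) as H12. simpl in H12.
  pose proof (sqnorm_shift s HT H12) as K.
  rewrite <- hsub_hscal, <- hsub_ACA, E, hsub_diag, sqnorm_hzero in K.
  pose proof (sqnorm_ge0 (hsub f1 f2)). pose proof (sqnorm_ge0 (hsub x1 x2)).
  assert (0 < s * s) by (pose proof (Rsqr_pos_lt s Hs); unfold Rsqr in *; lra).
  apply hsub_eq0, sqnorm_eq0. nra.
Qed.

Variables S A : X * X -> Prop.
Hypothesis S_subspace : is_linear_subspace S.
Hypothesis S_self_adjoint : self_adjoint S.
Hypothesis A_subspace : is_linear_subspace A.
Hypothesis A_closed : is_closed2 A.
Hypothesis dom_S_A : forall x, dom S x -> dom A x.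

Lemma shifted_range_lift (s : R) : s <> 0 ->
  forall w, exists x f u, S (x, f) /\ hsub f (hscal (Ci s) x) = w /\ T_s A (x, u).
Proof.
  intros Hs w.
  destruct (self_adjoint_shifted_range_full Hs S_subspace S_self_adjoint w) as [x [f [Hxf Ew]]].
  destruct (dom_S_A (ex_intro _ f Hxf)) as [g Hg].
  destruct (T_s_decompose A_subspace A_closed Hg) as [u [Hu _]].
  exists x, f, u. auto.
Qed.

Lemma lift_bound (C s : R) {x f u} : 0 <= C -> rel_bounded (T_s A) (T_s S) (/ 4) C ->
  Rabs s = 4 * C + 1 -> S (x, f) -> T_s A (x, u) ->
  hnorm u <= / 2 * hnorm (hsub f (hscal (Ci s) x)).
Proof.
  intros HC Hb Hs Hxf Hu.
  destruct (T_s_decompose S_subspace (self_adjoint_closed S_self_adjoint) Hxf) as [v [Hv _]].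
  pose proof (T_s_hnorm_le S_subspace Hv Hxf) as Hvf.
  pose proof (hnorm_le_shift s (self_adjoint_hermitian S_self_adjoint) Hxf) as Hfw.
  pose proof (Rabs_hnorm_le_shift s (self_adjoint_hermitian S_self_adjoint) Hxf) as Hxw.
  rewrite Hs in Hxw. specialize (Hb x v u Hv Hu). pose proof (hnorm_ge0 x). nra.
Qed.

Lemma lift_hsub (s : R) {x1 f1 u1 x2 f2 u2 x3 f3 u3} : s <> 0 ->
  S (x1, f1) -> T_s A (x1, u1) -> S (x2, f2) -> T_s A (x2, u2) -> S (x3, f3) -> T_s A (x3, u3) ->
  hsub f3 (hscal (Ci s) x3)
    = hsub (hsub f1 (hscal (Ci s) x1)) (hsub f2 (hscal (Ci s) x2)) ->
  u3 = hsub u1 u2.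
Proof.
  intros Hs HS1 HA1 HS2 HA2 HS3 HA3 E.
  pose proof (subspace_hsub (x1, f1) (x2, f2) S_subspace HS1 HS2) as HS12. simpl in HS12.
  assert (Ex : x3 = hsub x1 x2).
  { apply (shift_injective Hs S_subspace (self_adjoint_hermitian S_self_adjoint) HS3 HS12).
    rewrite E, <- hsub_hscal, hsub_ACA. reflexivity. }
  pose proof (subspace_hsub (x1, u1) (x2, u2) (T_s_subspace A_subspace) HA1 HA2) as HA12.
  simpl in HA12. rewrite <- Ex in HA12. exact (T_s_unique A_subspace HA3 HA12).
Qed.

Lemma shifted_sum_range_full (C s : R) : 0 <= C -> rel_bounded (T_s A) (T_s S) (/ 4) C ->
  Rabs s = 4 * C + 1 -> forall h, shifted_range (rel_sum S A) s h.
Proof.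
  intros HC Hb Hs h.
  assert (s0 : s <> 0) by (intro E; rewrite E, Rabs_R0 in Hs; lra).
  destruct (choice _ (shifted_range_lift s0)) as [xo Hxo].
  destruct (choice _ Hxo) as [fo Hfo]. destruct (choice _ Hfo) as [uo Huo].
  (* [h] is reached from the fixed point of [w |-> h - uo w] *)
  assert (Hcontr : forall w1 w2, hnorm (hsub (hsub h (uo w1)) (hsub h (uo w2)))
                                 <= / 2 * hnorm (hsub w1 w2)).
  { intros w1 w2. rewrite hsub_subl, hnorm_hsubC.
    destruct (Huo w1) as [HS1 [E1 HA1]]. destruct (Huo w2) as [HS2 [E2 HA2]].
    destruct (Huo (hsub w1 w2)) as [HS3 [E3 HA3]].
    rewrite <- (lift_hsub s0 HS1 HA1 HS2 HA2 HS3 HA3) by (rewrite E1, E2, E3; reflexivity).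
    rewrite <- E3 at 2. exact (@lift_bound C s _ _ _ HC Hb Hs HS3 HA3). }
  destruct (contraction_fixed_point (fun w => hsub h (uo w)) Hcontr) as [w Hw].
  destruct (Huo w) as [HSw [Ew HAw]].
  exists (xo w), (hadd (fo w) (uo w)). split.
  - exists (fo w), (uo w). simpl. split; [exact HSw | split; [exact (proj1 HAw) | reflexivity]].
  - rewrite hsub_hadd_l, Ew. rewrite <- Hw at 1. apply hsub_addK.
Qed.

End SumRange.

(* if [(y, h)] lies in [T^*], pick [(z, k)] in [T] with the same image under [T^* - i t]; then
   [y - z] is orthogonal to the range of [T + i t], which is everything *)
Lemma hermitian_shifted_ranges_self_adjoint {X : HilbertSpace} (T : X * X -> Prop) (t : R) :
  hermitian T -> (forall w, shifted_range T t w) -> (forall w, shifted_range T (- t) w) ->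
  self_adjoint T.
Proof.
  intros HT Hplus Hminus [y h]. split; [apply HT |]. intro Hadj.
  destruct (Hplus (hsub h (hscal (Ci t) y))) as [z [k [Hzk Ek]]].
  set (d := hsub y z).
  assert (Ed : hsub h k = hscal (Ci t) d).
  { unfold d. rewrite <- hsub_hscal. apply hsub_eq0. rewrite <- hsub_ACA, Ek, hsub_diag.
    reflexivity. }
  assert (Hrel : forall x f, T (x, f) -> ip (hsub h k) x = ip d f).
  { intros x f Hxf. pose proof (Hadj (x, f) Hxf) as e1. pose proof (HT _ Hzk (x, f) Hxf) as e2.
    simpl in e1, e2. unfold d. rewrite !ip_hsub_l, e1, e2. reflexivity. }
  destruct (Hminus d) as [x [f [Hxf Ef]]].
  specialize (Hrel x f Hxf). rewrite Ed, ip_scal_l in Hrel.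
  assert (Hd : ip d d = C0).
  { rewrite <- Ef at 2. rewrite ip_hsub_r, ip_hscal_r, <- Hrel. unfold Ci. simpl.
    destruct (ip d x). cpx. }
  apply ip_def in Hd. unfold d in Hd, Ed. apply hsub_eq0 in Hd. subst z.
  rewrite hsub_diag, hscal_hzero in Ed. apply hsub_eq0 in Ed. subst k. exact Hzk.
Qed.

Theorem theorem4p3 (X : HilbertSpace) (S A : X * X -> Prop) :
  is_linear_subspace S -> self_adjoint S ->
  is_linear_subspace A -> is_closed2 A -> hermitian A ->
  (forall x, dom S x -> dom A x) ->
  rel_compact (T_s A) (T_s S) ->
  is_linear_subspace (rel_sum S A) /\ self_adjoint (rel_sum S A).
Proof.
  intros Sl HS Al Ac HA Hdom Hcomp. split; [exact (rel_sum_subspace Sl Al) |].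
  destruct (rel_compact_rel_bound (eps := / 4) ltac:(lra) Sl Al Ac Hcomp) as [C [HC Hb]].
  apply (hermitian_shifted_ranges_self_adjoint (t := 4 * C + 1)).
  - exact (rel_sum_hermitian (self_adjoint_hermitian HS) HA).
  - apply (@shifted_sum_range_full X S A Sl HS Al Ac Hdom C _ HC Hb). apply Rabs_pos_eq. lra.
  - apply (@shifted_sum_range_full X S A Sl HS Al Ac Hdom C _ HC Hb). rewrite Rabs_Ropp. apply Rabs_pos_eq. lra.
Qed.
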